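(* Let $\alpha,\beta$ be cardinals with $\alpha>2$ and $\beta>2$. The class of $(\alpha,\beta)$-representable posets has no universal first-order axiomatization (in the signature consisting of one binary relation $\leq$).
   Context: For posets $P,Q$, a monotone map $h:P\to Q$ is an $(\alpha,\beta)$-morphism if whenever $S\subseteq P$ with $|S|<\alpha$ and $\bigwedge S$ exists in $P$, then $h(\bigwedge S)=\bigwedge h[S]$, and whenever $T\subseteq P$ with $|T|<\beta$ and $\bigvee T$ exists in $P$, then $h(\bigvee T)=\bigvee h[T]$. A poset $P$ is $(\alpha,\beta)$-representable if there is a set $X$ and an $(\alpha,\beta)$-morphism $h:P\to\wp(X)$ that is an order embedding, where $\wp(X)$ is the power set of $X$ ordered by inclusion. *)

From Stdlib Require Import Arith.

Definition injective {A B : Type} (f : A -> B) : Prop :=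
  forall x y, f x = f y -> x = y.

(* |S| < |A| for a subset S of T, and A a type standing for the cardinal alpha *)
Definition card_lt {T : Type} (S : T -> Prop) (A : Type) : Prop :=
  (exists f : {x : T | S x} -> A, injective f) /\
  ~ (exists g : A -> {x : T | S x}, injective g).

Definition card_gt2 (A : Type) : Prop := ~ (exists g : A -> bool, injective g).

Definition is_poset {T : Type} (le : T -> T -> Prop) : Prop :=
  (forall x, le x x) /\
  (forall x y, le x y -> le y x -> x = y) /\
  (forall x y z, le x y -> le y z -> le x z).

Definition is_lb {T : Type} (le : T -> T -> Prop) (S : T -> Prop) (m : T) : Prop :=
  forall s, S s -> le m s.
Definition is_ub {T : Type} (le : T -> T -> Prop) (S : T -> Prop) (m : T) : Prop :=
  forall s, S s -> le s m.
Definition is_glb {T : Type} (le : T -> T -> Prop) (S : T -> Prop) (m : T) : Prop :=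
  is_lb le S m /\ forall m', is_lb le S m' -> le m' m.
Definition is_lub {T : Type} (le : T -> T -> Prop) (S : T -> Prop) (m : T) : Prop :=
  is_ub le S m /\ forall m', is_ub le S m' -> le m m'.

Definition pset_le {X : Type} (U V : X -> Prop) : Prop := forall x, U x -> V x.

Definition image {T U : Type} (h : T -> U) (S : T -> Prop) : U -> Prop :=
  fun y => exists s, S s /\ y = h s.

Definition ab_morphism (A B : Type) {T X : Type} (le : T -> T -> Prop)
    (h : T -> (X -> Prop)) : Prop :=
  (forall x y, le x y -> pset_le (h x) (h y)) /\
  (forall (S : T -> Prop) (m : T), card_lt S A -> is_glb le S m ->
       is_glb pset_le (image h S) (h m)) /\
  (forall (S : T -> Prop) (m : T), card_lt S B -> is_lub le S m ->
       is_lub pset_le (image h S) (h m)).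

Definition order_embedding {T X : Type} (le : T -> T -> Prop)
    (h : T -> (X -> Prop)) : Prop :=
  forall x y, le x y <-> pset_le (h x) (h y).

Definition representable (A B : Type) {T : Type} (le : T -> T -> Prop) : Prop :=
  exists (X : Type) (h : T -> (X -> Prop)), ab_morphism A B le h /\ order_embedding le h.

(* variables are de Bruijn indices *)
Inductive form : Type :=
| FRel : nat -> nat -> form
| FEq  : nat -> nat -> form
| FBot : form
| FImp : form -> form -> form
| FAll : form -> form.

Definition scons {T : Type} (x : T) (env : nat -> T) : nat -> T :=
  fun n => match n with 0 => x | S k => env k end.

Fixpoint sat {T : Type} (R : T -> T -> Prop) (env : nat -> T) (f : form) : Prop :=
  match f with
  | FRel i j => R (env i) (env j)
  | FEq i j => env i = env j
  | FBot => False
  | FImp a b => sat R env a -> sat R env b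
  | FAll a => forall x : T, sat R (scons x env) a
  end.

Fixpoint bound_by (n : nat) (f : form) : Prop :=
  match f with
  | FRel i j => i < n /\ j < n
  | FEq i j => i < n /\ j < n
  | FBot => True
  | FImp a b => bound_by n a /\ bound_by n b
  | FAll a => bound_by (S n) a
  end.

Definition sentence (f : form) : Prop := bound_by 0 f.

Fixpoint qfree (f : form) : Prop :=
  match f with
  | FAll _ => False
  | FImp a b => qfree a /\ qfree b
  | _ => True
  end.

Inductive universal : form -> Prop :=
| univ_qf : forall f, qfree f -> universal f
| univ_all : forall f, universal f -> universal (FAll f).

Definition models {T : Type} (R : T -> T -> Prop) (f : form) : Prop :=
  forall env : nat -> T, sat R env f.

(** Universal sentences are preserved by substructures.  Every power set is
    trivially (α,β)-representable, and every poset embeds into a power set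
    via down-sets, so a universal axiomatization of the representable posets
    would make every poset representable.  The pentagon N5 is not: an
    embedding into a power set preserving binary joins and meets turns
    [a ∨ c = 1] and [b ∧ c = 0] into [h b ⊆ h a ∪ h c] and [h b ∩ h c ⊆ h a],
    hence [b ≤ a], although [a < b]. *)

From Stdlib Require Import Classical ClassicalDescription
  FunctionalExtensionality PropExtensionality ProofIrrelevance.

Section UniversalPreservation.

Variables (T U : Type) (R : T -> T -> Prop) (R' : U -> U -> Prop) (e : T -> U).
Hypothesis e_inj : injective e.
Hypothesis e_rel : forall x y, R x y <-> R' (e x) (e y).

Lemma sat_qfree_embedding (f : form) (env : nat -> T) :
  qfree f -> (sat R env f <-> sat R' (fun n => e (env n)) f).
Proof.
  induction f as [i j | i j | | f1 IH1 f2 IH2 | f]; simpl; intros Hq.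
  - apply e_rel.
  - split; [intros ->; reflexivity | apply e_inj].
  - tauto.
  - destruct Hq as [H1 H2]. specialize (IH1 H1). specialize (IH2 H2). tauto.
  - contradiction.
Qed.

Lemma scons_map (x : T) (env : nat -> T) :
  (fun n => e (scons x env n)) = scons (e x) (fun n => e (env n)).
Proof. apply functional_extensionality; intros [|n]; reflexivity. Qed.

Lemma sat_universal_embedding (f : form) :
  universal f -> forall env, sat R' (fun n => e (env n)) f -> sat R env f.
Proof.
  induction 1 as [f Hq | f _ IH]; intros env Hs.
  - apply (sat_qfree_embedding f env Hq), Hs.
  - intro x. apply IH. rewrite scons_map. apply Hs.
Qed.

Lemma models_universal_embedding (f : form) :
  universal f -> models R' f -> models R f.
Proof. intros Hu HR' env. apply sat_universal_embedding; [exact Hu | apply HR']. Qed.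

End UniversalPreservation.

Section DownSets.

Variables (T : Type) (le : T -> T -> Prop).
Hypothesis le_poset : is_poset le.

Definition down_set (x : T) : T -> Prop := fun y => le y x.

Lemma down_set_order_embedding : order_embedding le down_set.
Proof.
  destruct le_poset as [refl [_ trans]].
  intros x y; split.
  - intros Hxy z Hz. exact (trans z x y Hz Hxy).
  - intros Hs. apply Hs, refl.
Qed.

Lemma down_set_injective : injective down_set.
Proof.
  destruct le_poset as [refl [antisym _]].
  intros x y E. apply antisym.
  - change (down_set y x). rewrite <- E. apply refl.
  - change (down_set x y). rewrite E. apply refl.
Qed.

End DownSets.

Lemma pset_le_poset (X : Type) : is_poset (@pset_le X).
Proof.
  split; [|split].
  - intros U x Hx. exact Hx.
  - intros U V HUV HVU. apply functional_extensionality; intro x.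
    apply propositional_extensionality; split; auto.
  - intros U V W HUV HVW x Hx. auto.
Qed.

Lemma pset_le_representable (A B X : Type) : representable A B (@pset_le X).
Proof.
  exists X, (fun U => U). split; [split; [|split] | split; auto].
  - intros U V HUV. exact HUV.
  - intros S M _ [Hlb Hgr]. split.
    + intros s [t [Ht ->]]. apply Hlb, Ht.
    + intros M' HM'. apply Hgr. intros s Hs. apply HM'. exists s; auto.
  - intros S M _ [Hub Hle]. split.
    + intros s [t [Ht ->]]. apply Hub, Ht.
    + intros M' HM'. apply Hle. intros s Hs. apply HM'. exists s; auto.
Qed.

Definition pair {T : Type} (u v : T) : T -> Prop := fun x => x = u \/ x = v.

Lemma card_gt2_two_distinct (A : Type) : card_gt2 A -> exists a1 a2 : A, a1 <> a2.
Proof.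
  intro hA. apply NNPP. intro Hn. apply hA. exists (fun _ => true).
  intros x y _. apply NNPP. intro Hxy. apply Hn. exists x, y. exact Hxy.
Qed.

Lemma card_lt_of_injective_bool (T A : Type) (S : T -> Prop) :
  (exists k : {x : T | S x} -> bool, injective k) -> card_gt2 A -> card_lt S A.
Proof.
  intros [k kinj] hA. split.
  - destruct (card_gt2_two_distinct A hA) as [a1 [a2 H12]].
    exists (fun s => if k s then a1 else a2).
    intros s t E. apply kinj.
    destruct (k s), (k t); congruence.
  - intros [g ginj]. apply hA. exists (fun x => k (g x)).
    intros x y E. apply ginj, kinj, E.
Qed.

Lemma pair_injective_bool (T : Type) (u v : T) :
  exists k : {x : T | pair u v x} -> bool, injective k.
Proof.
  exists (fun s => if excluded_middle_informative (proj1_sig s = u) then true else false).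
  intros [x px] [y py]; simpl.
  destruct (excluded_middle_informative (x = u)), (excluded_middle_informative (y = u));
    intro E; try discriminate.
  - subst. f_equal. apply proof_irrelevance.
  - assert (x = v) by (destruct px; tauto). assert (y = v) by (destruct py; tauto).
    subst. f_equal. apply proof_irrelevance.
Qed.

Lemma card_lt_pair (T A : Type) (u v : T) : card_gt2 A -> card_lt (pair u v) A.
Proof. apply card_lt_of_injective_bool, pair_injective_bool. Qed.

Lemma representable_le_of_join_meet (A B T : Type) (le : T -> T -> Prop)
    (a b c j m : T) :
  card_gt2 A -> card_gt2 B -> representable A B le ->
  is_lub le (pair a c) j -> is_glb le (pair b c) m -> le m a -> le b j -> le b a.
Proof.
  intros hA hB [X [h [[hmon [hglb hlub]] hemb]]] Hj Hm Hma Hbj.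
  destruct (hlub _ _ (card_lt_pair T B a c hB) Hj) as [_ Hjoin].
  destruct (hglb _ _ (card_lt_pair T A b c hA) Hm) as [_ Hmeet].
  assert (Hj_sub : pset_le (h j) (fun x => h a x \/ h c x)).
  { apply Hjoin. intros s [t [[-> | ->] ->]] x Hx; auto. }
  assert (Hm_sup : pset_le (fun x => h b x /\ h c x) (h m)).
  { apply Hmeet. intros s [t [[-> | ->] ->]] x Hx; tauto. }
  apply hemb. intros x Hx.
  destruct (Hj_sub x (hmon b j Hbj x Hx)) as [Ha | Hc]; [exact Ha |].
  apply (hmon m a Hma), Hm_sup. auto.
Qed.

Inductive pentagon : Type := p0 | pa | pb | pc | p1.

Definition pentagon_leb (x y : pentagon) : bool :=
  match x, y with
  | p0, _ | _, p1 | pa, pa | pa, pb | pb, pb | pc, pc => true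
  | _, _ => false
  end.

Definition pentagon_le (x y : pentagon) : Prop := pentagon_leb x y = true.

Lemma pentagon_le_poset : is_poset pentagon_le.
Proof.
  unfold pentagon_le; split; [|split].
  - intros []; reflexivity.
  - intros [] [] H1 H2; first [reflexivity | discriminate].
  - intros [] [] [] H1 H2; first [reflexivity | discriminate].
Qed.

Lemma pentagon_not_representable (A B : Type) :
  card_gt2 A -> card_gt2 B -> ~ representable A B pentagon_le.
Proof.
  intros hA hB Hrep.
  assert (Hjoin : is_lub pentagon_le (pair pa pc) p1).
  { split.
    - intros [] _; reflexivity.
    - intros m' Hm'. specialize (Hm' pa (or_introl eq_refl)) as Ha.
      specialize (Hm' pc (or_intror eq_refl)).
      destruct m'; first [reflexivity | discriminate]. }
  assert (Hmeet : is_glb pentagon_le (pair pb pc) p0).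
  { split.
    - intros s _; reflexivity.
    - intros m' Hm'. specialize (Hm' pb (or_introl eq_refl)) as Hb.
      specialize (Hm' pc (or_intror eq_refl)).
      destruct m'; first [reflexivity | discriminate]. }
  assert (Hba : pentagon_le pb pa)
    by exact (representable_le_of_join_meet A B _ _ pa pb pc p1 p0
                hA hB Hrep Hjoin Hmeet eq_refl eq_refl).
  discriminate Hba.
Qed.

Theorem corollary2p9 (A B : Type) :
  card_gt2 A -> card_gt2 B ->
  ~ exists Sigma : form -> Prop,
      (forall f, Sigma f -> sentence f /\ universal f) /\
      (forall (T : Type) (R : T -> T -> Prop), inhabited T ->
         ((forall f, Sigma f -> models R f) <-> (is_poset R /\ representable A B R))).
Proof.
  intros hA hB [Sigma [HSigma Hax]].
  assert (Hpset : forall f, Sigma f -> models (@pset_le pentagon) f).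
  { apply (Hax _ _ (inhabits (fun _ => True))).
    split; [apply pset_le_poset | apply pset_le_representable]. }
  assert (Hpentagon : forall f, Sigma f -> models pentagon_le f).
  { intros f Hf.
    apply (models_universal_embedding _ _ _ _ _
             (down_set_injective _ _ pentagon_le_poset)
             (down_set_order_embedding _ _ pentagon_le_poset)
             f (proj2 (HSigma f Hf)) (Hpset f Hf)). }
  destruct (proj1 (Hax _ _ (inhabits p0)) Hpentagon) as [_ Hrep].
  exact (pentagon_not_representable A B hA hB Hrep).
Qed.
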